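(* Let $h,l_1,l_2$ be integers and $g\ge 3$ an integer with $l_1-l_2\ge 2$. Put $Q=(l_2,h-l_2)$, $P=(l_1,h-l_1)$ and $R=(k,h-l_2)$ where $k=l_2+g$ (so $R$ lies on the line $X+Y=h+g$ and has the same $Y$-coordinate as $Q$). Then $${}_{Q}N_{P}^{R}=\binom{g-2}{k-l_1}.$$
   Context: Let $\Sigma=\{a,b\}$. A lattice path is a finite sequence of points of $\mathbb Z^2$ in which each consecutive difference is $(1,0)$ (an east step) or $(0,1)$ (a north step). The word $w(p)\in\Sigma^*$ of a lattice path $p$ records its steps in order, writing $a$ for an east step and $b$ for a north step; conversely, for a point $A\in\mathbb Z^2$ and a word $w$, $p_A(w)$ is the lattice path starting at $A$ whose word is $w$. For lattice paths $p,q$, $p\cap q$ denotes the set of lattice points lying on both. For distinct lattice points $A,B,C$, ${}_{A}\mathcal N_{B}^{C}$ is the set of triples $(p,q,p')$ where $p$ is a lattice path from $A$ to $C$, $q$ is a lattice path from $B$ to $C$, $p'=p_B(w(p))$, $p\cap q=\{C\}$ and $q\cap p'=\{B\}$; and ${}_{A}N_{B}^{C}=|{}_{A}\mathcal N_{B}^{C}|$. Binomial coefficients $\binom{N}{r}$ are $0$ when $r<0$ or $r>N$. *)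

From HB Require Import structures.
From mathcomp Require Import all_boot all_order all_algebra.
Set Implicit Arguments. Unset Strict Implicit. Unset Printing Implicit Defensive.
Import GRing.Theory Num.Theory.
Local Open Scope ring_scope.

Definition point := (int * int)%type.

Inductive letter := La | Lb.
Definition letter_eqb (x y : letter) : bool :=
  match x, y with La, La | Lb, Lb => true | _, _ => false end.
Lemma letter_eqP : Equality.axiom letter_eqb.
Proof. by case; case; constructor. Qed.
HB.instance Definition _ := hasDecEq.Build letter letter_eqP.

Definition east (u : point) : point := (u.1 + 1, u.2).
Definition north (u : point) : point := (u.1, u.2 + 1).
Definition lstep (u v : point) : bool := (v == east u) || (v == north u).

Definition is_lattice_path (p : seq point) : bool :=
  if p is x :: s then path lstep x s else false.

Definition lpath_from_to (A C : point) (p : seq point) : bool :=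
  [&& is_lattice_path p, head A p == A & last A p == C].

Definition word (p : seq point) : seq letter :=
  if p is x :: s then pairmap (fun u v => if v == east u then La else Lb) x s
  else [::].

Fixpoint path_of_word_rest (A : point) (w : seq letter) : seq point :=
  if w is c :: w' then
    let A' := if c is La then east A else north A in A' :: path_of_word_rest A' w'
  else [::].
Definition path_of_word (A : point) (w : seq letter) : seq point :=
  A :: path_of_word_rest A w.

Definition meet_only (p q : seq point) (C : point) : Prop :=
  forall x : point, (x \in p) && (x \in q) = (x == C).

Definition in_NABC (A B C : point) (t : seq point * seq point * seq point) : Prop :=
  let: (p, q, p') := t in
  [/\ lpath_from_to A C p, lpath_from_to B C q,
      p' = path_of_word B (word p), meet_only p q C & meet_only q p' B].

Definition has_card (T : eqType) (S : T -> Prop) (n : nat) : Prop :=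
  exists s : seq T, [/\ uniq s, forall x, S x <-> x \in s & size s = n].

Definition N_count (A B C : point) (n : nat) : Prop :=
  has_card (in_NABC A B C) n.

(* binomial coefficient on integers, 0 when r < 0 or r > N *)
Definition binz (N r : int) : nat :=
  match N, r with Posz n, Posz m => 'C(n, m) | _, _ => 0%N end.

From HB Require Import structures.
From mathcomp Require Import all_boot all_order all_algebra zify.
Import GRing.Theory Num.Theory.
Set Implicit Arguments. Unset Strict Implicit.
Local Open Scope ring_scope.

(* The path p from Q to R has constant height, so it is the horizontal segment of g east
   steps, and p' is its translate starting at P.  A path q from P to R may touch p' only
   at P and p only at R: hence its first step is north (the point east of P is on p') and
   so is its last step (the point west of R is on p).  Conversely, once both end steps are
   north, all other points of q lie strictly between the two horizontal lines.  So the
   triples correspond to the words of the middle part of q, which has k - l1 east steps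
   and l1 - l2 - 2 north steps, i.e. length g - 2. *)

Definition east_steps (w : seq letter) : nat := count_mem La w.
Definition north_steps (w : seq letter) : nat := count_mem Lb w.

Lemma count_letters (w : seq letter) : (east_steps w + north_steps w)%N = size w.
Proof. by elim: w => [|[] w IH] //=; rewrite -IH ?addnS. Qed.

Lemma north_free_word w : north_steps w = 0%N -> w = nseq (east_steps w) La.
Proof. by elim: w => [|[] w IH] //= /IH {1}->. Qed.

Fixpoint enum_words (n a : nat) : seq (seq letter) :=
  if n is n'.+1 then
    [seq La :: w | w <- if a is a'.+1 then enum_words n' a' else [::]] ++
    [seq Lb :: w | w <- enum_words n' a]
  else if a is 0 then [:: [::]] else [::].

Lemma size_enum_words n a : size (enum_words n a) = 'C(n, a).
Proof.
elim: n a => [|n IH] [|a] //; rewrite size_cat !size_map /= !IH ?bin0 //.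
by rewrite binS addnC.
Qed.

Lemma mem_enum_words n a w :
  (w \in enum_words n a) = (size w == n) && (east_steps w == a).
Proof.
have mem_map_cons d S u : (u \in [seq d :: v | v <- S]) =
    if u is c :: v then (c == d) && (v \in S) else false.
  case: u => [|c v]; first by apply/mapP => -[].
  by apply/mapP/andP => [[u uS [-> ->]] | [/eqP-> vS]]; [rewrite eqxx | exists v].
elim: n a w => [|n IH] a [|c w]; case: a => [|a] //=; rewrite ?mem_cat !mem_map_cons //.
all: by case: c; rewrite /= ?IH ?orbF ?add0n ?add1n ?eqSS ?andbF.
Qed.

Lemma uniq_enum_words n a : uniq (enum_words n a).
Proof.
have cons_inj d : injective (cons d : seq letter -> _) by move=> ? ? [].
elim: n a => [|n IH] [|a] //=; rewrite ?cat_uniq !map_inj_uniq ?IH //=.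
by rewrite andbT; apply/hasPn => _ /mapP[w _ ->]; apply/mapP=> -[].
Qed.

Lemma has_card_map (U T : eqType) (f : U -> T) (S : T -> Prop) (s : seq U) :
  uniq s -> injective f -> (forall t, S t <-> exists2 u, u \in s & t = f u) ->
  has_card S (size s).
Proof.
move=> s_uniq f_inj Sf; exists (map f s); rewrite size_map map_inj_uniq //.
by split=> // t; rewrite Sf; split=> [[u us ->] | /mapP]; first exact: map_f.
Qed.

Lemma meet_only_eq p q C x : meet_only p q C -> x \in p -> x \in q -> x = C.
Proof. by move=> pq xp xq; apply/eqP; rewrite -pq xp xq. Qed.

Lemma path_of_word_cons A c w : path_of_word A (c :: w) =
  A :: path_of_word (if c is La then east A else north A) w.
Proof. by []. Qed.

Lemma path_of_word_rcons A w c : path_of_word A (rcons w c) =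
  rcons (path_of_word A w)
        (let B := last A (path_of_word A w) in if c is La then east B else north B).
Proof. by elim: w A => [|c' w IH] A //=; rewrite path_of_word_cons IH. Qed.

Lemma last_path_of_word A w : last A (path_of_word A w) =
  (A.1 + (east_steps w)%:Z, A.2 + (north_steps w)%:Z).
Proof.
elim: w A => [|c w IH] [x y]; first by rewrite /= !addr0.
case: c; [have /= -> := IH (east (x, y)) | have /= -> := IH (north (x, y))];
  by congr pair; lia.
Qed.

Lemma last_path_of_word_framed A w : last A (path_of_word A (Lb :: rcons w Lb)) =
  (A.1 + (east_steps w)%:Z, A.2 + (north_steps w)%:Z + 2).
Proof.
rewrite last_path_of_word /east_steps /north_steps /= -cats1 !count_cat /=.
by congr pair; lia.
Qed.

Lemma mem_head_path_of_word A w : A \in path_of_word A w.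
Proof. exact: mem_head. Qed.

Lemma mem_last_path_of_word A w : last A (path_of_word A w) \in path_of_word A w.
Proof. by rewrite /path_of_word last_cons mem_last. Qed.

Lemma is_lattice_path_of_word A w : is_lattice_path (path_of_word A w).
Proof.
rewrite /=; elim: w A => [|c w IH] A //=; rewrite IH andbT.
by case: c; rewrite /lstep eqxx ?orbT.
Qed.

Lemma north_neq_east A : (north A == east A) = false.
Proof. by case: A => x y; rewrite xpair_eqE; apply/negbTE; lia. Qed.

Lemma word_path_of_word A w : word (path_of_word A w) = w.
Proof.
elim: w A => [|c w IH] A //=.
have := IH (if c is La then east A else north A); rewrite /word /= => ->.
by case: c; rewrite ?eqxx ?north_neq_east.
Qed.

Lemma path_of_wordK x s : path lstep x s -> path_of_word x (word (x :: s)) = x :: s.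
Proof.
elim: s x => [|y s IH] x //= /andP[/orP[] /eqP-> /IH]; rewrite /word /= => E.
  by rewrite eqxx path_of_word_cons E.
by rewrite north_neq_east path_of_word_cons E.
Qed.

Lemma lpath_from_to_path_of_word A C w :
  lpath_from_to A C (path_of_word A w) = (last A (path_of_word A w) == C).
Proof. by rewrite /lpath_from_to is_lattice_path_of_word eqxx. Qed.

Lemma lpath_from_to_word A C p : lpath_from_to A C p -> p = path_of_word A (word p).
Proof. by case: p => [|x s] /and3P[] // Hs /eqP /= Ex _; subst x; rewrite path_of_wordK. Qed.

Lemma mem_path_of_word_height A w x : x \in path_of_word A w ->
  A.2 <= x.2 <= A.2 + (north_steps w)%:Z.
Proof.
elim: w A => [|c w IH] [a b]; first by rewrite inE => /eqP-> /=; lia.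
rewrite path_of_word_cons inE => /orP[/eqP-> /=|]; first by lia.
by case: c => /IH /=; lia.
Qed.

Lemma mem_path_of_word_east A n x : (x \in path_of_word A (nseq n La)) =
  (x.2 == A.2) && (A.1 <= x.1 <= A.1 + n%:Z).
Proof.
case: x => x y; elim: n A => [|n IH] [a b].
  by rewrite inE xpair_eqE /=; apply/idP/idP; lia.
rewrite [nseq _ _]/= path_of_word_cons inE IH /= xpair_eqE.
by apply/idP/idP; lia.
Qed.

Lemma mem_path_of_word_north_framed A w x :
  let q := path_of_word A (Lb :: rcons w Lb) in
  x \in q -> [\/ x = A, x = last A q | A.2 < x.2 < A.2 + (north_steps w).+2%:Z].
Proof.
move=> q; rewrite {}/q path_of_word_cons path_of_word_rcons last_cons last_rcons.
rewrite inE mem_rcons inE.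
case/or3P=> [/eqP-> | /eqP-> | /mem_path_of_word_height /= ?];
  [by constructor 1 | by constructor 2 | by constructor 3; lia].
Qed.

Lemma first_step_north A n c w : (0 < n)%N ->
  meet_only (path_of_word A (c :: w)) (path_of_word A (nseq n La)) A -> c = Lb.
Proof.
case: c => // n_gt0 A_only.
have east_in_q : east A \in path_of_word A (La :: w).
  by rewrite path_of_word_cons inE mem_head_path_of_word orbT.
have east_in_ray : east A \in path_of_word A (nseq n La).
  by rewrite mem_path_of_word_east /=; lia.
by have /(congr1 fst) /= := meet_only_eq A_only east_in_q east_in_ray; lia.
Qed.

Lemma last_step_north A B n w c : (0 < n)%N ->
  let q := path_of_word B (rcons w c) in
  let C := (A.1 + n%:Z, A.2) in
  last B q = C -> meet_only (path_of_word A (nseq n La)) q C -> c = Lb.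
Proof.
case: c => // n_gt0 q C; rewrite {}/q path_of_word_rcons last_rcons.
set y := last B (path_of_word B w) => east_y C_only.
have y_in_q : y \in rcons (path_of_word B w) (east y).
  by rewrite mem_rcons inE mem_last_path_of_word orbT.
have y_def : y = (A.1 + n%:Z - 1, A.2).
  by move: east_y; rewrite /east; case: (y) => y1 y2 [] <- <-; congr pair; lia.
have y_in_ray : y \in path_of_word A (nseq n La).
  by rewrite mem_path_of_word_east y_def /=; lia.
by have /(congr1 fst) := meet_only_eq C_only y_in_ray y_in_q; rewrite y_def /=; lia.
Qed.

Section HorizontalStrip.

Variables (Q P : point) (g : nat).
Hypotheses (g_gt0 : (0 < g)%N) (P_below_Q : P.2 + 2 <= Q.2).

Let R : point := (Q.1 + g%:Z, Q.2).

Definition triple_of_word (w : seq letter) :=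
  (path_of_word Q (nseq g La), path_of_word P (Lb :: rcons w Lb),
   path_of_word P (nseq g La)).

Lemma triple_of_word_inj : injective triple_of_word.
Proof.
move=> w w' /(congr1 (fun t => word t.1.2)); rewrite !word_path_of_word => -[].
exact: rcons_injl.
Qed.

Lemma lpath_from_to_horizontal p : lpath_from_to Q R p -> p = path_of_word Q (nseq g La).
Proof.
move=> pQR; have p_def := lpath_from_to_word pQR.
move: pQR; rewrite p_def lpath_from_to_path_of_word last_path_of_word xpair_eqE /R /=.
case/andP=> /eqP east_count /eqP north_count.
rewrite (@north_free_word (word p)); last by lia.
by congr (path_of_word _ (nseq _ _)); lia.
Qed.

Lemma in_NABC_of_word w :
  (east_steps w)%:Z = R.1 - P.1 -> (north_steps w)%:Z = Q.2 - P.2 - 2 ->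
  in_NABC Q P R (triple_of_word w).
Proof.
move=> east_w north_w; rewrite /R /= in east_w.
have last_q : last P (path_of_word P (Lb :: rcons w Lb)) = R.
  by rewrite last_path_of_word_framed /R /=; congr pair; lia.
split.
- rewrite lpath_from_to_path_of_word last_path_of_word /east_steps /north_steps.
  by rewrite !count_nseq /= mul1n mul0n addr0.
- by rewrite lpath_from_to_path_of_word last_q.
- by rewrite word_path_of_word.
- move=> x; apply/idP/eqP => [/andP[x_p x_q] | ->].
    move: x_p; rewrite mem_path_of_word_east.
    case/mem_path_of_word_north_framed: x_q => [-> | -> // | ];
    by rewrite ?last_q /R /= => *; exfalso; lia.
  rewrite -{2}last_q mem_last_path_of_word mem_path_of_word_east /=; lia.
- move=> x; apply/idP/eqP => [/andP[x_q] | ->]; last by rewrite !mem_head_path_of_word.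
  rewrite mem_path_of_word_east.
  case/mem_path_of_word_north_framed: x_q => [-> // | -> | ];
  by rewrite ?last_q /R /= => *; exfalso; lia.
Qed.

Lemma word_of_in_NABC t : in_NABC Q P R t ->
  exists w, [/\ (east_steps w)%:Z = R.1 - P.1, (north_steps w)%:Z = Q.2 - P.2 - 2
               & t = triple_of_word w].
Proof.
case: t => [[p q] p'] [pQR qPR -> pq_R qp'_P].
move/lpath_from_to_horizontal in pQR; subst p.
rewrite word_path_of_word in qp'_P *.
have q_def := lpath_from_to_word qPR; move: (word q) q_def qPR pq_R qp'_P => wq -> {q}.
rewrite lpath_from_to_path_of_word => /eqP last_q pq_R qp'_P.
case/lastP: wq => [|u c] in last_q pq_R qp'_P *.
  by move: last_q => /(congr1 snd) /=; lia.
have c_north := last_step_north g_gt0 last_q pq_R; subst c.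
case: u => [|c w] in last_q pq_R qp'_P *.
  by move: last_q; rewrite last_path_of_word /north_steps => /(congr1 snd) /=; lia.
have c_north := first_step_north g_gt0 qp'_P; subst c.
exists w; move: last_q; rewrite last_path_of_word_framed /R => -[] /=.
by split=> //; lia.
Qed.

End HorizontalStrip.

Theorem mainTheorem7 (h l1 l2 g : int) :
  3 <= g -> 2 <= l1 - l2 ->
  let k := l2 + g in
  let Q : point := (l2, h - l2) in
  let P : point := (l1, h - l1) in
  let R : point := (k, h - l2) in
  N_count Q P R (binz (g - 2) (k - l1)).
Proof.
move=> g_ge3 l_gap k Q P R; rewrite {}/R {}/k {}/Q {}/P /N_count.
have [n g_def] : exists n : nat, g = n%:Z by exists `|g|%N; lia.
have n_gt0 : (0 < n)%N by lia.
have P_below_Q : h - l1 + 2 <= h - l2 by lia.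
have shape := word_of_in_NABC (Q := (l2, h - l2)) (P := (l1, h - l1)) n_gt0 P_below_Q.
have -> : g - 2 = (n - 2)%N%:Z by lia.
subst g; case east_gap: (l2 + n%:Z - l1) => [a | a] /=; last first.
  exists [::]; split=> // t; split=> // /shape [w [east_w _ _]].
  by move: east_w; rewrite in_nil /=; lia.
rewrite -size_enum_words.
apply: (has_card_map (uniq_enum_words _ _) (@triple_of_word_inj _ _ n)) => t.
split=> [/shape [w [/= east_w north_w ->]] | [w]].
  exists w => //; rewrite mem_enum_words -count_letters; apply/andP; split; apply/eqP; lia.
rewrite mem_enum_words -count_letters => /andP[/eqP size_w /eqP east_w] ->.
apply: in_NABC_of_word => //=; lia.
Qed.
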